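(* Let $\boldsymbol{A}\in\mathsf{PSL}$ be finite and $\Phi$ a Sahlqvist quasiequation in the language $\{\land,\lnot,0,1\}$ of $\mathsf{PSL}$. If $\boldsymbol{A}$ validates $\Phi$, then $\boldsymbol{A}^+$ validates $\Phi$.
   Context: $\mathsf{PSL}$: algebras $\langle A;\land,\lnot,0,1\rangle$, $\langle A;\land\rangle$ a semilattice (order $a\le b$ iff $a\land b=a$) with minimum $0$, maximum $1$, and $c\land a=0\iff c\le\lnot a$. Join irreducible element: not the minimum, and whenever $a=b\lor c$ with the join existing, $a=b$ or $a=c$; $\mathsf{J}(\boldsymbol{A})$ is the poset of join irreducibles. For finite $\boldsymbol{A}$, $\boldsymbol{A}^+=\langle\mathsf{Dw}(\mathsf{J}(\boldsymbol{A}));\cap,\lnot,\emptyset,\mathsf{J}(\boldsymbol{A})\rangle$ with $\mathsf{Dw}$ the downsets and $\lnot D=\{a\in\mathsf{J}(\boldsymbol{A}):D\cap{\downarrow}a=\emptyset\}$. Sahlqvist quasiequations: formulas over variables with $\land,\lor,\to,\lnot,0,1$; an occurrence of a variable is positive (negative) if the number of negations and antecedents of implications in whose scope it lies is even (odd); a formula is positive (negative) if all its variable occurrences are. A Sahlqvist antecedent is built from variables, negative formulas, $0,1$ using only $\land,\lor$. A Sahlqvist implication is a positive formula, or $\lnot\varphi$ with $\varphi$ a Sahlqvist antecedent, or $\varphi\to\psi$ with $\varphi$ a Sahlqvist antecedent and $\psi$ positive. A Sahlqvist quasiequation is $\varphi_1\land y\le z\,\&\cdots\&\,\varphi_n\land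 y\le z\Longrightarrow y\le z$ (universally quantified), $y,z$ distinct variables not in the $\varphi_i$, each $\varphi_i$ built from Sahlqvist implications using only $\land,\lor$, and $a\le b$ meaning $a\land b\approx a$. It is in the language of $\mathsf{PSL}$ if only $\land,\lnot,0,1$ occur. *)

From HB Require Import structures.
From Stdlib Require List.
From mathcomp Require Import all_boot.

Set Implicit Arguments.
Unset Strict Implicit.
Unset Printing Implicit Defensive.

Record alg := Alg {
  car :> Type;
  ameet : car -> car -> car;
  aneg : car -> car;
  abot : car;
  atop : car }.

Definition is_PSL (A : alg) : Prop :=
  (forall a b c : A, ameet a (ameet b c) = ameet (ameet a b) c) /\
  (forall a b : A, ameet a b = ameet b a) /\
  (forall a : A, ameet a a = a) /\
  (forall a : A, ameet (abot A) a = abot A) /\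
  (forall a : A, ameet a (atop A) = a) /\
  (forall a c : A, ameet c a = abot A <-> ameet c (aneg a) = c).

Section Plus.
Variables (T : finType) (m : T -> T -> T) (n : T -> T) (z o : T).

Definition leA (a b : T) : bool := m a b == a.

Definition is_joinb (b c a : T) : bool :=
  [&& leA b a, leA c a & [forall d, leA b d ==> leA c d ==> leA a d]].

Definition join_irr (a : T) : bool :=
  (a != z) && [forall b, forall c, is_joinb b c a ==> (a == b) || (a == c)].

Definition JA : {set T} := [set a | join_irr a].

Definition downJ (D : {set T}) : bool :=
  (D \subset JA) &&
  [forall a, forall b, [&& a \in D, b \in JA & leA b a] ==> (b \in D)].

Definition dnJ (a : T) : {set T} := [set b in JA | leA b a].

Definition negJ (D : {set T}) : {set T} := [set a in JA | [disjoint D & dnJ a]].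

Lemma downJI D1 D2 : downJ D1 -> downJ D2 -> downJ (D1 :&: D2).
Proof.
move=> /andP[s1 /forallP f1] /andP[s2 /forallP f2]; apply/andP; split.
  exact: subset_trans (subsetIl _ _) s1.
apply/forallP=> a; apply/forallP=> b; apply/implyP.
rewrite inE => /and3P[/andP[a1 a2] bJ ba]; rewrite inE.
move: (forallP (f1 a) b) (forallP (f2 a) b).
by rewrite a1 a2 bJ ba /= => -> ->.
Qed.

Lemma downJ0 : downJ set0.
Proof.
apply/andP; split; first exact: sub0set.
by apply/forallP=> a; apply/forallP=> b; rewrite inE.
Qed.

Lemma downJT : downJ JA.
Proof.
apply/andP; split; first exact: subxx.
by apply/forallP=> a; apply/forallP=> b; apply/implyP=> /and3P[].
Qed.

Lemma downJN (trans : forall a b c, leA a b -> leA b c -> leA a c) D :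
  downJ (negJ D).
Proof.
apply/andP; split.
  by apply/subsetP=> a; rewrite inE => /andP[].
apply/forallP=> a; apply/forallP=> b; apply/implyP.
rewrite inE => /and3P[/andP[aJ dis] bJ ba]; rewrite inE bJ /=.
apply: disjointWr dis; apply/subsetP=> c; rewrite !inE => /andP[-> cb] /=.
exact: trans cb ba.
Qed.

Definition PC := {D : {set T} | downJ D}.

Definition plus_of (trans : forall a b c, leA a b -> leA b c -> leA a c) : alg :=
  @Alg PC
    (fun X Y => exist _ (sval X :&: sval Y) (downJI (svalP X) (svalP Y)))
    (fun X => exist _ (negJ (sval X)) (downJN trans (sval X)))
    (exist _ set0 downJ0)
    (exist _ JA downJT).

End Plus.

Lemma PSL_le_trans (T : finType) m n z o :
  is_PSL (@Alg T m n z o) -> forall a b c, leA m a b -> leA m b c -> leA m a c.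
Proof.
case=> assoc _ a b c /eqP ab /eqP bc; apply/eqP.
have /= e := assoc a b c.
by rewrite -{1}ab -e bc ab.
Qed.

Definition plus_alg (T : finType) m n z o (HA : is_PSL (@Alg T m n z o)) : alg :=
  @plus_of T m z (PSL_le_trans HA).

Inductive fm :=
| FVar of nat
| FAnd of fm & fm
| FOr of fm & fm
| FImp of fm & fm
| FNeg of fm
| F0
| F1.

(* polar true f: every variable occurrence in f is positive;
   polar false f: every variable occurrence in f is negative
   (parity of negations and implication antecedents in scope). *)
Fixpoint polar (p : bool) (f : fm) : bool :=
  match f with
  | FVar _ => p
  | FAnd a b | FOr a b => polar p a && polar p b
  | FImp a b => polar (~~ p) a && polar p b
  | FNeg a => polar (~~ p) a
  | F0 | F1 => true
  end.
Definition positive := polar true.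
Definition negative := polar false.

Fixpoint sahl_ant (f : fm) : bool :=
  negative f ||
  match f with
  | FVar _ | F0 | F1 => true
  | FAnd a b | FOr a b => sahl_ant a && sahl_ant b
  | _ => false
  end.

Definition sahl_impl (f : fm) : bool :=
  positive f ||
  match f with
  | FNeg a => sahl_ant a
  | FImp a b => sahl_ant a && positive b
  | _ => false
  end.

Fixpoint sahl_body (f : fm) : bool :=
  sahl_impl f ||
  match f with
  | FAnd a b | FOr a b => sahl_body a && sahl_body b
  | _ => false
  end.

Fixpoint occurs (x : nat) (f : fm) : bool :=
  match f with
  | FVar y => x == y
  | FAnd a b | FOr a b | FImp a b => occurs x a || occurs x b
  | FNeg a => occurs x a
  | F0 | F1 => false
  end.

Fixpoint psl_lang (f : fm) : bool :=
  match f with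
  | FVar _ | F0 | F1 => true
  | FAnd a b => psl_lang a && psl_lang b
  | FNeg a => psl_lang a
  | FOr _ _ | FImp _ _ => false
  end.

(* the quasiequation  phi_1 /\ y <= z & ... & phi_n /\ y <= z ==> y <= z *)
Record sqe := SQE { qe_ants : seq fm; qe_y : nat; qe_z : nat }.

Definition is_sahlqvist_qe (Q : sqe) : bool :=
  (qe_y Q != qe_z Q) &&
  all (fun f => [&& sahl_body f, ~~ occurs (qe_y Q) f & ~~ occurs (qe_z Q) f])
      (qe_ants Q).

Definition qe_in_psl_lang (Q : sqe) : bool := all psl_lang (qe_ants Q).

(* evaluation in the signature <meet, neg, 0, 1>; \/ and -> are not part
   of that signature and are only evaluated (to 0) as a dummy: they never
   occur in quasiequations in the language of PSL. *)
Fixpoint eval (A : alg) (v : nat -> A) (f : fm) : A :=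
  match f with
  | FVar x => v x
  | FAnd a b => ameet (eval v a) (eval v b)
  | FNeg a => aneg (eval v a)
  | F0 => abot A
  | F1 => atop A
  | FOr _ _ | FImp _ _ => abot A
  end.

Definition holds_le (A : alg) (v : nat -> A) (a b : fm) : Prop :=
  eval v (FAnd a b) = eval v a.

Definition validates (A : alg) (Q : sqe) : Prop :=
  forall v : nat -> A,
    (forall f, List.In f (qe_ants Q) -> holds_le v (FAnd f (FVar (qe_y Q))) (FVar (qe_z Q))) ->
    holds_le v (FVar (qe_y Q)) (FVar (qe_z Q)).

From mathcomp Require Import all_boot.

Set Implicit Arguments.
Unset Strict Implicit.
Unset Printing Implicit Defensive.

(* The map a |-> {k in J(A) | k <= a} embeds A into A^+ as a {/\, ~, 0, 1}-algebra
   (finiteness gives a join irreducible below every nonzero element).  Given a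
   valuation V into A^+ satisfying the premises and j in V(y), approximate V below
   j by the valuation v(x) = \/ {k in V(x) | k <= j} of A.  Sending y to j and z to
   the join of the elements strictly below j, validity of the quasiequation in A
   and join irreducibility of j force j <= v(phi) for some premise phi.  Along a
   Sahlqvist formula this transfers back to A^+: positive parts move from v to V
   at the point j, Sahlqvist antecedents move from V to v at the join
   irreducibles below j.  Hence j lies in V(phi) /\ V(y), which is below V(z). *)

Lemma disjointP (T : finType) (A B : {set T}) :
  reflect (forall x, x \in A -> x \in B -> False) [disjoint A & B].
Proof.
rewrite disjoints_subset; apply: (iffP subsetP) => h x.
  by move=> /h; rewrite inE => /negP.
by move=> xA; rewrite inE; apply/negP; apply: h.
Qed.

Lemma all_In (X : Type) (p : pred X) s x : all p s -> List.In x s -> p x.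
Proof. by elim: s => //= a s IHs /andP[pa ps] [<-|/IHs]; [|apply]. Qed.

Lemma eval_ext (A : alg) (v1 v2 : nat -> A) f :
  (forall x, occurs x f -> v1 x = v2 x) -> eval v1 f = eval v2 f.
Proof.
elim: f => //= [x|a IHa b IHb|a IHa] v12.
- by apply: v12; rewrite eqxx.
- by rewrite IHa ?IHb // => x ox; apply: v12; rewrite ox ?orbT.
- by rewrite IHa.
Qed.

Section FinitePSL.
Variables (T : finType) (m : T -> T -> T) (n : T -> T) (z o : T).
Hypothesis HA : is_PSL (@Alg T m n z o).

Local Notation A := (@Alg T m n z o).
Local Notation P := (plus_alg HA).
Local Notation le := (leA m).
Local Notation J := (JA m z).
Local Notation dn := (dnJ m z).
Local Notation neg := (negJ m z).
Local Notation down := (downJ m z).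
Local Notation den w f := (sval (@eval P w f)).

Let meetA a b c : m a (m b c) = m (m a b) c. Proof. by case: HA. Qed.
Let meetC a b : m a b = m b a. Proof. by case: HA => _ []. Qed.
Let meetxx a : m a a = a. Proof. by case: HA => _ [] _ []. Qed.
Let meet0x a : m z a = z. Proof. by case: HA => _ [] _ [] _ []. Qed.
Let meetx1 a : m a o = a. Proof. by case: HA => _ [] _ [] _ [] _ []. Qed.
Let pseudocompl a c : m c a = z <-> m c (n a) = c.
Proof. by case: HA => _ [] _ [] _ [] _ []. Qed.

Lemma lexx a : le a a. Proof. by rewrite /leA meetxx. Qed.

Lemma le_trans a b c : le a b -> le b c -> le a c.
Proof. exact: (PSL_le_trans HA). Qed.

Lemma le_anti a b : le a b -> le b a -> a = b.
Proof. by move=> /eqP ab /eqP ba; rewrite -ab meetC ba. Qed.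

Lemma leIl a b : le (m a b) a.
Proof. by rewrite /leA -meetA (meetC b a) meetA meetxx. Qed.

Lemma leIr a b : le (m a b) b.
Proof. by rewrite /leA -meetA meetxx. Qed.

Lemma lexI x a b : le x (m a b) = le x a && le x b.
Proof.
apply/idP/andP => [xab|[/eqP xa /eqP xb]].
  by split; apply: le_trans xab _; [apply: leIl | apply: leIr].
by rewrite /leA meetA xa xb.
Qed.

Lemma lex1 a : le a o. Proof. by rewrite /leA meetx1. Qed.

Lemma le0x a : le z a. Proof. by rewrite /leA meet0x. Qed.

Lemma lex0 a : le a z = (a == z).
Proof. by apply/idP/eqP => [az|->]; [apply: le_anti az (le0x a) | apply: lexx]. Qed.

Lemma le_neg a c : le c (n a) = (m c a == z).
Proof. by apply/eqP/eqP; rewrite pseudocompl. Qed.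

Definition bigmeet (s : seq T) : T := foldr m o s.

Lemma bigmeet_le s u : u \in s -> le (bigmeet s) u.
Proof.
elim: s => //= a s IHs; rewrite in_cons => /orP[/eqP->|us]; first exact: leIl.
exact: le_trans (leIr _ _) (IHs us).
Qed.

Lemma le_bigmeet s x : (forall u, u \in s -> le x u) -> le x (bigmeet s).
Proof.
elim: s => [|a s IHs] xs /=; first exact: lex1.
by rewrite lexI xs ?mem_head ?IHs // => u us; rewrite xs // in_cons us orbT.
Qed.

Definition lub (s : seq T) : T := bigmeet [seq u <- enum T | all (le^~ u) s].

Lemma lub_ub s x : x \in s -> le x (lub s).
Proof.
by move=> xs; apply: le_bigmeet => u; rewrite mem_filter => /andP[/allP/(_ x xs)].
Qed.

Lemma lub_le s u : (forall x, x \in s -> le x u) -> le (lub s) u.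
Proof.
by move=> su; apply: bigmeet_le; rewrite mem_filter mem_enum andbT; apply/allP.
Qed.

Lemma lub_cons x s : is_joinb m x (lub s) (lub (x :: s)).
Proof.
apply/and3P; split; first by rewrite lub_ub ?mem_head.
  by apply: lub_le => y ys; rewrite lub_ub // in_cons ys orbT.
apply/forallP => d; apply/implyP => xd; apply/implyP => sd.
apply: lub_le => y; rewrite in_cons => /orP[/eqP->//|ys].
exact: le_trans (lub_ub ys) sd.
Qed.

Lemma join_irr_neq0 k : k \in J -> k != z.
Proof. by rewrite inE => /andP[]. Qed.

Lemma join_irr_mem_lub j s : j \in J -> lub s = j -> j \in s.
Proof.
rewrite inE => /andP[jz /forallP jirr]; elim: s => [|x s IHs] js.
  have : le (lub [::]) z by apply: lub_le.
  by rewrite js lex0 (negbTE jz).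
have := forallP (jirr x) (lub s); rewrite -{1}js lub_cons /=.
by case/orP=> [/eqP->|/eqP/esym/IHs js']; rewrite ?mem_head // in_cons js' orbT.
Qed.

Lemma card_down_lt b a :
  le b a -> b != a -> #|[set x | le x b]| < #|[set x | le x a]|.
Proof.
move=> ba nba; apply: proper_card; apply/properP; split.
  by apply/subsetP => x; rewrite !inE => xb; apply: le_trans xb ba.
exists a; rewrite !inE ?lexx //; apply: contra nba => ab.
by rewrite (le_anti ba ab).
Qed.

(* A minimal nonzero element below [a] is join irreducible. *)
Lemma exists_join_irr_le a : a != z -> exists2 k, k \in J & le k a.
Proof.
move=> az; pose below_a k := (k != z) && le k a.
have Pa : below_a a by rewrite /below_a az lexx.
case: (arg_minnP (fun k => #|[set x | le x k]|) Pa) => k /andP[kz ka] kmin.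
exists k => //.
have minimal b : le b k -> b != k -> b = z.
  move=> bk nbk; apply/eqP; apply: contraT => bz.
  have : below_a b by rewrite /below_a bz (le_trans bk ka).
  by move=> /kmin; rewrite leqNgt card_down_lt.
rewrite inE /join_irr kz; apply/forallP => b; apply/forallP => c.
apply/implyP => /and3P[bk ck /forallP k_lub].
have [//|nb] := eqVneq b k; have [//|nc] := eqVneq c k.
move: (k_lub z); rewrite (minimal b bk nb) (minimal c ck nc) lexx lex0 /=.
by rewrite (negbTE kz).
Qed.

Lemma downJ_sub (D : {set T}) a : down D -> a \in D -> a \in J.
Proof. by case/andP => /subsetP DJ _ /DJ. Qed.

Lemma downJ_le (D : {set T}) a b :
  down D -> a \in D -> b \in J -> le b a -> b \in D.
Proof.
case/andP => _ /forallP Ddown aD bJ ba.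
by move: (forallP (Ddown a) b); rewrite aD bJ ba.
Qed.

Lemma mem_dn a k : (k \in dn a) = (k \in J) && le k a.
Proof. by rewrite inE. Qed.

Lemma mem_negJ (D : {set T}) k :
  (k \in neg D) = (k \in J) && [disjoint D & dn k].
Proof. by rewrite inE. Qed.

Lemma down_dn a : down (dn a).
Proof.
apply/andP; split; first by apply/subsetP => x; rewrite inE => /andP[].
apply/forallP => x; apply/forallP => y; apply/implyP; rewrite !inE.
by case/and3P => /andP[_ xa] -> yx /=; apply: le_trans yx xa.
Qed.

Lemma dnI a b : dn (m a b) = dn a :&: dn b.
Proof. by apply/setP => k; rewrite !inE lexI andbACA andbb. Qed.

Lemma dn0 : dn z = set0.
Proof. by apply/setP => k; rewrite !inE lex0 /join_irr andbAC; case: eqP. Qed.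

Lemma dn1 : dn o = J.
Proof. by apply/setP => k; rewrite !inE lex1 andbT. Qed.

Lemma dnN a : dn (n a) = neg (dn a).
Proof.
apply/setP => k; rewrite mem_negJ mem_dn; have [kJ|//] /= := boolP (k \in J).
rewrite le_neg; apply/eqP/disjointP => [ka0 k' | ka_disj].
  rewrite !mem_dn => /andP[k'J k'a] /andP[_ k'k].
  by move: (join_irr_neq0 k'J); rewrite -lex0 -ka0 lexI k'k k'a.
apply/eqP; apply: contraT => /exists_join_irr_le[k' k'J].
rewrite lexI => /andP[k'k k'a].
by exfalso; apply: (ka_disj k'); rewrite mem_dn k'J ?k'a ?k'k.
Qed.

Definition to_plus (a : T) : P := exist _ (dn a) (down_dn a).

Lemma eval_to_plus (v : nat -> T) f :
  psl_lang f -> den (to_plus \o v) f = dn (@eval A v f).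
Proof.
elim: f => //= [a IHa b IHb /andP[pa pb]|a IHa pa|_|_].
- by rewrite dnI IHa ?IHb.
- by rewrite dnN IHa.
- by rewrite dn0.
- by rewrite dn1.
Qed.

(* [dn (approx V j x)] below need not be included in [V x]; this weaker relation
   is what holds, and [negJ] still turns it into an inclusion. *)
Definition dominates (D E : {set T}) : Prop :=
  forall k, k \in D -> exists2 k', k' \in E & le k' k.

Lemma subset_dominates (D E : {set T}) : D \subset E -> dominates D E.
Proof. by move=> /subsetP DE k kD; exists k; rewrite ?lexx ?DE. Qed.

Lemma negJS (D E : {set T}) : D \subset E -> neg E \subset neg D.
Proof.
move=> /subsetP DE; apply/subsetP => k; rewrite !mem_negJ => /andP[-> Edisj] /=.
by apply/disjointP => x /DE xE xk; move/disjointP: Edisj => /(_ x xE xk).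
Qed.

Lemma dominates_negJ (D E : {set T}) :
  down E -> dominates D E -> neg E \subset neg D.
Proof.
move=> Edown DE; apply/subsetP => k; rewrite !mem_negJ => /andP[-> Edisj] /=.
apply/disjointP => x /DE [k' k'E k'x]; rewrite mem_dn => /andP[_ xk].
move/disjointP: Edisj => /(_ k' k'E); apply.
by rewrite mem_dn (downJ_sub Edown k'E) (le_trans k'x xk).
Qed.

Section Transfer.
Variables w1 w2 : nat -> P.
Hypothesis dominates_var : forall x, dominates (sval (w1 x)) (sval (w2 x)).

Lemma dominates_polar f : psl_lang f ->
  (positive f -> dominates (den w1 f) (den w2 f)) /\
  (negative f -> den w2 f \subset den w1 f).
Proof.
elim: f => [x _|a IHa b IHb /andP[pa pb]|a _ b _ //|a _ b _ //|a IHa pa|_|_] /=.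
- by split=> // _; apply: dominates_var.
- have [posa nega] := IHa pa; have [posb negb] := IHb pb.
  split=> /andP[qa qb]; last exact: setISS (nega qa) (negb qb).
  move=> k; rewrite inE => /andP[ka kb].
  have [k1 k1a k1k] := posa qa k ka.
  have k1J := downJ_sub (svalP (eval w2 a)) k1a.
  have [k2 k2b k2k1] := posb qb k1 (downJ_le (svalP (eval w1 b)) kb k1J k1k).
  have k2J := downJ_sub (svalP (eval w2 b)) k2b.
  exists k2; last exact: le_trans k2k1 k1k.
  by rewrite inE k2b (downJ_le (svalP (eval w2 a)) k1a k2J k2k1).
- have [posa nega] := IHa pa; split=> qa.
    exact/subset_dominates/negJS/nega.
  exact: dominates_negJ (svalP (eval w2 a)) (posa qa).
- by split=> // _ k; rewrite inE.
- by split=> // _; apply: subset_dominates.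
Qed.

Variable j : T.
Hypothesis j_up : forall x, j \in sval (w1 x) -> j \in sval (w2 x).
Hypothesis below_j_down :
  forall x k, k \in J -> le k j -> k \in sval (w2 x) -> k \in sval (w1 x).

Lemma positive_transfer f :
  psl_lang f -> positive f -> j \in den w1 f -> j \in den w2 f.
Proof.
elim: f => [x _ _|a IHa b IHb /andP[pa pb] /andP[qa qb]|a _ b _ //|a _ b _ //|
            a _ pa qa|//|//] /=.
- exact: j_up.
- by rewrite !inE => /andP[/IHa -> //] /IHb ->.
- by have [_ nega] := @dominates_polar a pa; apply: (subsetP (negJS (nega qa))).
Qed.

Lemma sahl_ant_transfer f : psl_lang f -> sahl_ant f ->
  forall k, k \in J -> le k j -> k \in den w2 f -> k \in den w1 f.
Proof.
elim: f => [x|a IHa b IHb|a _ b _|a _ b _|a _| |] pf /orP[negf|antf] k kJ kj;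
  try by have [_ neg_sub] := dominates_polar pf; apply: (subsetP (neg_sub negf)).
- exact: below_j_down.
- move: pf antf => /= /andP[pa pb] /andP[sa sb]; rewrite !inE => /andP[ka kb].
  by rewrite IHa ?IHb.
all: by move: pf antf => //=.
Qed.

Lemma sahl_impl_transfer f :
  psl_lang f -> sahl_impl f -> j \in den w1 f -> j \in den w2 f.
Proof.
move=> pf /orP[posf|]; first exact: positive_transfer.
case: f pf => //= a pa anta; rewrite !mem_negJ => /andP[-> disj1] /=.
apply/disjointP => k ka2; rewrite mem_dn => /andP[kJ kj].
move/disjointP: disj1 => /(_ k (sahl_ant_transfer pa anta kJ kj ka2)); apply.
by rewrite mem_dn kJ.
Qed.

Lemma sahl_body_transfer f :
  psl_lang f -> sahl_body f -> j \in den w1 f -> j \in den w2 f.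
Proof.
elim: f => [x|a IHa b IHb|a IHa b IHb|a IHa b IHb|a IHa| |] pf /orP[implf|bodyf];
  try exact: sahl_impl_transfer; move: pf bodyf => //= /andP[pa pb] /andP[ba bb].
by rewrite !inE => /andP[ja jb]; rewrite IHa ?IHb.
Qed.
End Transfer.

Definition approx (V : nat -> P) (j : T) (x : nat) : T :=
  lub (enum [set k in sval (V x) | le k j]).

Lemma approx_ub (V : nat -> P) j x k :
  k \in sval (V x) -> le k j -> le k (approx V j x).
Proof. by move=> kV kj; apply: lub_ub; rewrite mem_enum inE kV kj. Qed.

Lemma approx_le (V : nat -> P) j x : le (approx V j x) j.
Proof. by apply: lub_le => k; rewrite mem_enum inE => /andP[]. Qed.

Lemma approx_join_irr (V : nat -> P) j x :
  j \in J -> le j (approx V j x) -> j \in sval (V x).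
Proof.
move=> jJ j_le.
have /(join_irr_mem_lub jJ) : approx V j x = j := le_anti (approx_le V j x) j_le.
by rewrite mem_enum inE => /andP[].
Qed.

(* If no element of V(x) lay below k, every element of V(x) would be disjoint
   from k, hence below ~k, forcing k <= ~k and k = 0. *)
Lemma dominates_approx (V : nat -> P) j x :
  dominates (dn (approx V j x)) (sval (V x)).
Proof.
move=> k; rewrite inE => /andP[kJ k_le].
have [/existsP[k' /andP[k'V k'k]]|none] :=
  boolP [exists k', (k' \in sval (V x)) && le k' k]; first by exists k'.
have : le k (n k).
  apply: le_trans k_le (lub_le _) => s; rewrite mem_enum inE => /andP[sV _].
  rewrite le_neg; apply: contraNT none => /exists_join_irr_le[k'' k''J].
  rewrite lexI => /andP[k''s k''k]; apply/existsP; exists k''.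
  by rewrite k''k (downJ_le (svalP (V x)) sV k''J k''s).
by rewrite le_neg meetxx (negbTE (join_irr_neq0 kJ)).
Qed.

Lemma sahl_body_approx (V : nat -> P) j f :
  j \in J -> psl_lang f -> sahl_body f ->
  le j (@eval A (approx V j) f) -> j \in den V f.
Proof.
move=> jJ pf bodyf j_le.
have jf : j \in den (to_plus \o approx V j) f by rewrite eval_to_plus // mem_dn jJ.
apply: (sahl_body_transfer (w1 := to_plus \o approx V j)) pf bodyf jf.
- by move=> x; apply: dominates_approx.
- by move=> x; rewrite mem_dn => /andP[_]; apply: approx_join_irr.
- by move=> x k kJ kj kV; rewrite mem_dn kJ approx_ub.
Qed.

Lemma some_antecedent_above (Q : sqe) : is_sahlqvist_qe Q -> validates A Q ->
  forall (v : nat -> T) j, j \in J ->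
  exists2 f, List.In f (qe_ants Q) & le j (@eval A v f).
Proof.
move=> /andP[yz sahlQ] validQ v j jJ.
pose above f := le j (@eval A v f).
have [/List.existsb_exists[f [fQ jf]]|none] :=
  boolP (List.existsb above (qe_ants Q)); first by exists f.
pose j_ := lub (enum [set b | le b j & b != j]).
pose v' x := if x == qe_y Q then j else if x == qe_z Q then j_ else v x.
have jj_ : le j j_.
  apply/eqP; move: (validQ v'); rewrite /holds_le /= /v' eqxx eq_sym (negbTE yz) eqxx.
  apply=> f fQ; have /and3P[_ ny nz] := all_In sahlQ fQ.
  have -> : @eval A v' f = @eval A v f.
    apply: eval_ext => x ox; rewrite /v'.
    have -> : (x == qe_y Q) = false by apply: contraNF ny => /eqP<-.
    by have -> : (x == qe_z Q) = false by apply: contraNF nz => /eqP<-.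
  apply/eqP/lub_ub; rewrite mem_enum inE leIr /=.
  apply: contraNneq none => ej; apply/List.existsb_exists; exists f; split=> //.
  by rewrite /above /leA meetC ej eqxx.
have j_j : le j_ j by apply: lub_le => b; rewrite mem_enum inE => /andP[].
by have := join_irr_mem_lub jJ (le_anti j_j jj_); rewrite mem_enum inE eqxx andbF.
Qed.

End FinitePSL.

Theorem proposition5p11 (T : finType) (m : T -> T -> T) (n : T -> T) (z o : T)
  (HA : is_PSL (@Alg T m n z o)) (Q : sqe) :
  is_sahlqvist_qe Q -> qe_in_psl_lang Q ->
  validates (@Alg T m n z o) Q -> validates (plus_alg HA) Q.
Proof.
move=> sahlQ pslQ validQ V premV; apply: val_inj; apply/setIidPl/subsetP => j jy.
have jJ : j \in JA m z := downJ_sub (svalP (V (qe_y Q))) jy.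
have [f fQ jf] := some_antecedent_above HA sahlQ validQ (approx V j) jJ.
have /and3P[bodyf _ _] := all_In (proj2 (andP sahlQ)) fQ.
have jVf := sahl_body_approx jJ (all_In pslQ fQ) bodyf jf.
move/(congr1 sval)/setP/(_ j): (premV f fQ).
by rewrite /= !inE jVf jy.
Qed.
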